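(* Let $S$ be a numerical semigroup with minimal generators $e<a_1<\dots<a_t$. Then ${\rm d}_{\max}(S)=\max_{0\le i<e,\ u\in{\rm adj}(S_i)}|\mathcal R(u)|$.
   Context: A numerical semigroup is a submonoid of $(\mathbb N,+)$ with finite complement in $\mathbb N$, with minimal generators $e<a_1<\dots<a_t$. An $S$-factorization of $n\in S$ is a tuple $(c_0,\dots,c_t)\in\mathbb N^{t+1}$ with $c_0e+\sum c_ia_i=n$; its length is $\sum c_i$. ${\rm ord}(n;S)$ is the maximum length of an $S$-factorization of $n$, and ${\rm d}_{\max}(n;S)$ is the number of $S$-factorizations of $n$ of length ${\rm ord}(n;S)$. We set ${\rm d}_{\max}(S)=\max_{n\in S}{\rm d}_{\max}(n;S)$. Let $d_i=a_i-e$, $B=\langle e,d_1,\dots,d_t\rangle$ (the blowup) and $\mathcal D=(e,d_1,\dots,d_t)$. A $B^{\mathcal D}$-factorization of $b\in B$ is a tuple $(x_0,\dots,x_t)\in\mathbb N^{t+1}$ with $x_0e+\sum x_id_i=b$, with length $\sum x_i$. $\min{\rm ord}(b;B^{\mathcal D})$ is the minimum length of such a factorization, and $\mathcal P(b)$ is the set of all of them. For $s\in S$ put ${\rm adj}(s)=s-{\rm ord}(s;S)e$, and $S_i=\{s\in S:s\equiv i\pmod e\}$. For fixed $i$ write ${\rm adj}(S_i)=\{{\rm adj}(s):s\in S_i\}=\{u_0<u_1<\cdots\}$. Define $\mathcal R(u_0)=\mathcal P(u_0)$ and, for $j>0$, $\mathcal R(u_j)=\{\mathbf x\in\mathcal P(u_j):|\mathbf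 x|<\min{\rm ord}(u_{j-1};B^{\mathcal D})-\frac{u_j-u_{j-1}}{e}\}$. *)

From mathcomp Require Import all_boot all_order all_algebra.
From mathcomp Require Import boolp.
Set Implicit Arguments. Unset Strict Implicit. Unset Printing Implicit Defensive.
Import Order.TTheory GRing.Theory Num.Theory.

Definition wsum (g c : seq nat) : nat := sumn [seq x.1 * x.2 | x <- zip c g].

Definition inS (g : seq nat) (n : nat) : Prop :=
  exists c : seq nat, size c = size g /\ wsum g c = n.

Fixpoint tuples (k n : nat) : seq (seq nat) :=
  match k with
  | 0 => [:: [::]]
  | k'.+1 => [seq x :: s | x <- iota 0 n.+1, s <- tuples k' n]
  end.

(* Since all weights used below are positive, every coordinate of a
   factorization of n is at most n, so this enumerates ALL factorizations. *)
Definition facts (g : seq nat) (n : nat) : seq (seq nat) :=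
  [seq c <- tuples (size g) n | wsum g c == n].

Section NS.
Variables (e : nat) (a : seq nat).

Definition gensS : seq nat := e :: a.
(* the tuple D = (e, a_1 - e, ..., a_t - e) generating the blowup B *)
Definition gensD : seq nat := e :: [seq x - e | x <- a].

Definition ordS (n : nat) : nat := \max_(c <- facts gensS n) sumn c.
Definition dmaxn (n : nat) : nat :=
  count (fun c => sumn c == ordS n) (facts gensS n).
Definition adj (s : nat) : nat := s - ordS s * e.
Definition inAdj (i u : nat) : Prop :=
  exists s, inS gensS s /\ s %% e = i /\ adj s = u.
Definition minordB (b : nat) : nat :=
  let lens := [seq sumn x | x <- facts gensD b] in foldr minn (head 0 lens) lens.
Definition Pset (b : nat) : seq (seq nat) := facts gensD b.
(* membership of x in R(u), u \in adj(S_i):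
   either u = u_0 is the least element of adj(S_i), or
   v = u_{j-1} is the predecessor of u in adj(S_i) and
   |x| < min ord(v; B^D) - (u - v)/e. *)
Definition inR (i u : nat) (x : seq nat) : bool :=
  `[< (forall w, inAdj i w -> u <= w) \/
      exists v, [/\ inAdj i v, v < u,
                 (forall w, inAdj i w -> v < w -> u <= w) &
                 ((sumn x)%:R < (minordB v)%:R - ((u%:R - v%:R) / e%:R) :> rat)%R] >].
Definition Rcard (i u : nat) : nat := count (inR i u) (Pset u).
End NS.

Definition minimal_gens (g : seq nat) : Prop :=
  forall j, j < size g -> ~ inS (take j g ++ drop j.+1 g) (nth 0 g j).

Definition finite_complement (g : seq nat) : Prop :=
  exists N, forall n, N <= n -> inS g n.

From Pilot Require Import Defs.
From mathcomp Require Import all_boot all_order all_algebra.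
From mathcomp Require Import boolp zify.
Set Implicit Arguments. Unset Strict Implicit. Unset Printing Implicit Defensive.
Import GRing.Theory Num.Theory.

(* A factorization of s of maximal length ord(s) has the form (c0, y) with
   c0 + |y| = ord(s), and (0, y) is then a B^D-factorization of adj(s) of length
   at most ord(s); conversely every such B^D-factorization starts with 0 and
   comes from a unique maximal one.  So d_max(s) counts the factorizations of
   adj(s) of length at most ord(s).  They all lie in R(adj s): a factorization of
   the predecessor adj(s) - ke of length at most ord(s) + k would lift to a
   factorization of s longer than ord(s).  Conversely, every u in adj(S_i) is
   adj(s) for an s such that all of R(u) has length at most ord(s): if u is least
   take s + ue for any s with adj(s) = u, and otherwise the last s in an arithmetic progression of step e
   along which adj drops from u to its predecessor.  Both maxima exist because
   adj(s) < N + e as soon as every n >= N lies in S.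
*)

Lemma mem_tuples k n c :
  (c \in tuples k n) = (size c == k) && all (leq^~ n) c.
Proof.
elim: k c => [|k IH] c; first by case: c.
apply/(@allpairsP _ _ _ (fun x s => x :: s) (iota 0 n.+1) (tuples k n) c)/idP => [[[x s] [+ + ->]]|].
  by rewrite mem_iota IH /= eqSS ltnS => -> /andP [-> ->].
case: c => [|x s] //=; rewrite eqSS => /and3P [size_s x_le s_le].
by exists (x, s); rewrite /= ?inE ?mem_iota ?IH ?size_s ?s_le; split => //; lia.
Qed.

Lemma uniq_tuples k n : uniq (tuples k n).
Proof.
elim: k => [|k IH] //; apply: (@allpairs_uniq _ _ _ (fun x s => x :: s)) => //; first exact: iota_uniq.
by move=> [x1 s1] [x2 s2] _ _ [-> ->].
Qed.

Lemma wsum_cons g0 g c0 c : wsum (g0 :: g) (c0 :: c) = c0 * g0 + wsum g c.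
Proof. by []. Qed.

Lemma mem_leq_sumn (s : seq nat) x : x \in s -> x <= sumn s.
Proof. by elim: s => //= y s IH; rewrite inE => /predU1P [->|/IH]; lia. Qed.

Lemma leq_sumn_wsum g c : all (leq 1) g -> size c = size g -> sumn c <= wsum g c.
Proof.
elim: g c => [|g0 g IH] [|c0 c] //= /andP [g0_pos g_pos] [size_c].
by rewrite wsum_cons; have := IH c g_pos size_c; nia.
Qed.

Lemma mem_facts g n c : all (leq 1) g ->
  (c \in facts g n) = (size c == size g) && (wsum g c == n).
Proof.
move=> g_pos; rewrite mem_filter mem_tuples andbC -andbA.
apply/and3P/andP => [[-> _ ->] //|[/eqP size_c /eqP wc]].
rewrite size_c wc; split=> //.
apply/allP => x /mem_leq_sumn; have := leq_sumn_wsum g_pos size_c; lia.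
Qed.

Lemma uniq_facts g n : uniq (facts g n).
Proof. exact/filter_uniq/uniq_tuples. Qed.

Lemma count_leq_inj (T : eqType) (P1 P2 : pred T) (s1 s2 : seq T) (f : T -> T) :
  uniq s1 ->
  (forall x y, x \in s1 -> P1 x -> y \in s1 -> P1 y -> f x = f y -> x = y) ->
  (forall x, x \in s1 -> P1 x -> f x \in s2 /\ P2 (f x)) ->
  count P1 s1 <= count P2 s2.
Proof.
move=> s1_uniq f_inj f_maps; rewrite -!size_filter -(size_map f).
apply: uniq_leq_size.
  rewrite map_inj_in_uniq ?filter_uniq // => x y.
  by rewrite !mem_filter => /andP [P1x x_s1] /andP [P1y y_s1]; apply: f_inj.
move=> y /mapP [x]; rewrite mem_filter => /andP [P1x x_s1] ->.
by have [fx_s2 P2fx] := f_maps x x_s1 P1x; rewrite mem_filter fx_s2 P2fx.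
Qed.

Lemma bigmax_seq_attained (T : eqType) (s : seq T) (F : T -> nat) :
  s != [::] -> exists2 x, x \in s & \max_(y <- s) F y = F x.
Proof.
elim: s => // x s IH _; rewrite big_cons.
case: s IH => [|x' s] IH; first by exists x; rewrite ?big_nil ?maxn0 ?mem_head.
have [y y_s ->] := IH isT.
case: (leqP (F x) (F y)) => F_xy.
  by exists y; rewrite // in_cons y_s orbT.
by exists x; rewrite ?mem_head.
Qed.

Lemma foldr_minn_le (s : seq nat) h x : x \in s -> foldr minn h s <= x.
Proof.
by elim: s => //= y s IH; rewrite inE geq_min => /predU1P [->|/IH ->]; rewrite ?leqnn ?orbT.
Qed.

Lemma foldr_minn_mem h (s : seq nat) : foldr minn h s \in h :: s.
Proof.
elim: s => [|y s IH] /=; first exact: mem_head.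
rewrite !inE in IH *; rewrite /minn; case: ifP => _; first by rewrite eqxx orbT.
by case/orP: IH => ->; rewrite ?orbT.
Qed.

(* The rational inequality of the definition of R(u), for u = v + ke. *)
Lemma ltr_natBdiv (e v k n m : nat) : 0 < e ->
  ((n%:R : rat) < m%:R - ((v + k * e)%:R - v%:R) / e%:R)%R = (n + k < m).
Proof.
move=> e_gt0; have e_neq0 : (e%:R : rat) != 0%R by rewrite pnatr_eq0 -lt0n.
by rewrite natrD natrM (addrC v%:R%R) addrK mulfK // ltrBrDr -natrD ltr_nat.
Qed.

Lemma exists_last_eq (f : nat -> nat) u J : f 0 = u -> f J != u ->
  exists j, [/\ j < J, f j = u & f j.+1 != u].
Proof.
move=> f0; elim: J => [|J IH fJ]; first by rewrite f0 eqxx.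
have [fJu|/IH [j [lt_jJ fj fj1]]] := eqVneq (f J) u; first by exists J.
by exists j; rewrite ltnS ltnW.
Qed.

Section NumericalSemigroup.
Variables (e : nat) (a : seq nat).
Hypotheses (e_gt0 : 0 < e) (a_gt_e : all (fun x => e < x) a).

Local Notation gS := (gensS e a).
Local Notation gD := (gensD e a).
Local Notation wD := (wsum [seq x - e | x <- a]).
Local Notation ordS := (Defs.ordS e a).
Local Notation adj := (Defs.adj e a).
Local Notation inAdj := (Defs.inAdj e a).
Local Notation minordB := (Defs.minordB e a).

Lemma gensS_pos : all (leq 1) gS.
Proof. by rewrite /= e_gt0; apply: sub_all a_gt_e => x; apply: leq_ltn_trans. Qed.

Lemma gensD_pos : all (leq 1) gD.
Proof. by rewrite /= e_gt0 all_map; apply: sub_all a_gt_e => x /=; rewrite subn_gt0. Qed.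

Lemma wsum_gensS c0 y : size y = size a ->
  wsum gS (c0 :: y) = (c0 + sumn y) * e + wD y.
Proof.
rewrite wsum_cons mulnDl -addnA => size_y; congr (_ + _).
elim: a a_gt_e y size_y => [_ [] //|x s IH /andP [e_lt_x s_gt_e] [|y0 y] //= [size_y]].
by rewrite !wsum_cons IH // mulnBr; have := leq_mul (leqnn y0) (ltnW e_lt_x); lia.
Qed.

Lemma mem_facts_gensS n c0 y :
  (c0 :: y \in facts gS n) = (size y == size a) && ((c0 + sumn y) * e + wD y == n).
Proof.
rewrite mem_facts ?gensS_pos //= eqSS.
by case: eqP => // size_y; rewrite wsum_gensS.
Qed.

Lemma mem_facts_gensD v x0 y :
  (x0 :: y \in facts gD v) = (size y == size a) && (x0 * e + wD y == v).
Proof. by rewrite mem_facts ?gensD_pos //= size_map eqSS. Qed.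

Lemma inS_facts n : inS gS n <-> exists c, c \in facts gS n.
Proof.
split=> [[c [size_c <-]]|[c]]; first by exists c; rewrite mem_facts ?gensS_pos // size_c !eqxx.
by rewrite mem_facts ?gensS_pos // => /andP [/eqP ? /eqP ?]; exists c.
Qed.

Lemma leq_sumn_ordS n c : c \in facts gS n -> sumn c <= ordS n.
Proof. by move=> c_fact; apply: (@leq_bigmax_seq _ _ xpredT). Qed.

Lemma ordS_attained n : inS gS n ->
  exists y, [/\ size y = size a, ordS n * e + wD y = n & sumn y <= ordS n].
Proof.
case/inS_facts=> c c_fact; have : facts gS n != [::] by case: (facts gS n) c_fact.
case/(bigmax_seq_attained sumn) => -[|c0 y]; first by rewrite mem_facts ?gensS_pos.
rewrite mem_facts_gensS => /andP [/eqP size_y /eqP fact_n] ordS_n.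
by exists y; rewrite /Defs.ordS ordS_n -fact_n; split=> //=; lia.
Qed.

Lemma leq_ordS n L y : size y = size a -> L * e + wD y = n -> sumn y <= L ->
  inS gS n /\ L <= ordS n.
Proof.
move=> size_y fact_n y_le_L.
have c_fact : L - sumn y :: y \in facts gS n.
  by rewrite mem_facts_gensS size_y subnK // fact_n !eqxx.
split; first by apply/inS_facts; exists (L - sumn y :: y).
by have := leq_sumn_ordS c_fact; rewrite /= subnK.
Qed.

Lemma adjD_ordS n : inS gS n -> adj n + ordS n * e = n.
Proof. by case/ordS_attained=> y [_ fact_n _]; rewrite /Defs.adj subnK // -{2}fact_n leq_addr. Qed.

Lemma modn_adj n : inS gS n -> adj n = n %[mod e].
Proof. by move/adjD_ordS => {2}<-; rewrite addnC modnMDl. Qed.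

Lemma adj_factorization n : inS gS n ->
  exists y, [/\ size y = size a, 0 :: y \in facts gD (adj n) & sumn y <= ordS n].
Proof.
move=> n_S; have [y [size_y fact_n y_le]] := ordS_attained n_S.
exists y; split=> //; rewrite mem_facts_gensD size_y eqxx /=.
by apply/eqP; have := adjD_ordS n_S; lia.
Qed.

Lemma adj_addMe n j : inS gS n ->
  [/\ inS gS (n + j * e), ordS n + j <= ordS (n + j * e) & adj (n + j * e) <= adj n].
Proof.
move=> n_S; have [y [size_y fact_n y_le]] := ordS_attained n_S.
have [nj_S ordS_nj] := @leq_ordS (n + j * e) (ordS n + j) y size_y
  ltac:(rewrite mulnDl; lia) ltac:(lia).
split=> //; have := adjD_ordS n_S; have := adjD_ordS nj_S.
by have := leq_mul ordS_nj (leqnn e); rewrite mulnDl; lia.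
Qed.

Lemma adj_le_modn s1 s2 : inS gS s1 -> s1 <= s2 -> s1 = s2 %[mod e] ->
  inS gS s2 /\ adj s2 <= adj s1.
Proof.
move=> s1_S le_s12 eq_s12.
have /divnK s2_s1 : e %| s2 - s1 by rewrite -eqn_mod_dvd // eq_s12.
have [] := adj_addMe ((s2 - s1) %/ e) s1_S.
by rewrite s2_s1 subnKC.
Qed.

Lemma adj_lt N : (forall n, N <= n -> inS gS n) -> forall s, inS gS s -> adj s < N + e.
Proof.
move=> N_S s s_S; case: (ltnP s N) => [lt_sN|le_Ns].
  by rewrite /Defs.adj; lia.
set s0 := N + (s - N) %% e.
have s0_S : inS gS s0 by apply: N_S; rewrite leq_addr.
have [_] := @adj_le_modn s0 s s0_S ltac:(rewrite /s0; have := leq_mod (s - N) e; lia)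
  ltac:(by rewrite modnDmr subnKC).
by rewrite /Defs.adj; have := ltn_pmod (s - N) e_gt0; lia.
Qed.

(* x lifts to a factorization of s of length x0 + ord(s) + k. *)
Lemma short_factorization s v k x : inS gS s -> x \in facts gD v ->
  v + k * e = adj s -> sumn x <= ordS s + k -> head 0 x = 0 /\ k = 0.
Proof.
case: x => [|x0 y] s_S; first by rewrite mem_facts ?gensD_pos.
rewrite mem_facts_gensD => /andP [/eqP size_y /eqP fact_v] v_adj short.
have [_] := @leq_ordS s (x0 + ordS s + k) y size_y
  ltac:(have := adjD_ordS s_S; rewrite !mulnDl; lia) ltac:(move: short => /=; lia).
by rewrite /=; lia.
Qed.

Lemma inAdj_adj s : inS gS s -> inAdj (s %% e) (adj s).
Proof. by move=> s_S; exists s. Qed.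

Lemma inAdj_modn i w : inAdj i w -> w %% e = i.
Proof. by case=> s [s_S [<- <-]]; rewrite modn_adj. Qed.

Lemma inAdj_gap i u v : inAdj i u -> inAdj i v -> v < u ->
  exists2 k, 0 < k & u = v + k * e.
Proof.
move=> u_adj v_adj lt_vu.
have e_dvd : e %| u - v.
  by rewrite -eqn_mod_dvd ?(ltnW lt_vu) // (inAdj_modn u_adj) (inAdj_modn v_adj).
exists ((u - v) %/ e); first by rewrite divn_gt0 // dvdn_leq ?subn_gt0.
by rewrite divnK // subnKC // ltnW.
Qed.

Lemma minordB_le v x : x \in facts gD v -> minordB v <= sumn x.
Proof. by move=> x_fact; apply/foldr_minn_le/map_f. Qed.

Lemma minordB_attained v x : x \in facts gD v ->
  exists2 x', x' \in facts gD v & minordB v = sumn x'.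
Proof.
move=> /(map_f sumn); set l := map sumn (facts gD v) => l_x.
have : minordB v \in l.
  have -> : minordB v = foldr minn (head 0 l) l by [].
  have := foldr_minn_mem (head 0 l) l; rewrite inE => /predU1P [->|//].
  by case: l l_x => // ? ? _; apply: mem_head.
by case/mapP=> x' x'_fact ->; exists x'.
Qed.

Lemma dmaxnE s : inS gS s ->
  dmaxn e a s = count (fun x => sumn x <= ordS s) (facts gD (adj s)).
Proof.
move=> s_S; have adj_s := adjD_ordS s_S.
have short_cons x : x \in facts gD (adj s) -> sumn x <= ordS s -> exists y, x = 0 :: y.
  case: x => [|x0 y]; first by rewrite mem_facts ?gensD_pos.
  move=> x_fact x_short; exists y.
  by have [/= -> _] := @short_factorization s _ 0 _ s_S x_fact (addn0 _) ltac:(lia).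
apply/eqP; rewrite eqn_leq; apply/andP; split.
  apply: (count_leq_inj (f := fun c => 0 :: behead c)); first exact: uniq_facts.
    move=> [|c1 y1] [|c2 y2] //; rewrite ?mem_facts ?gensS_pos ?andbF //.
    by move=> _ /eqP /= c1_max _ /eqP /= c2_max [y12]; subst y2; have -> : c1 = c2 by lia.
  move=> [|c0 y]; first by rewrite mem_facts ?gensS_pos.
  rewrite mem_facts_gensS => /andP [/eqP size_y /eqP fact_s] /eqP /= c_max.
  by rewrite mem_facts_gensD size_y eqxx /=; split; [apply/eqP; lia | lia].
apply: (count_leq_inj (f := fun x => (ordS s - sumn x) :: behead x)); first exact: uniq_facts.
  move=> x1 x2 x1_fact x1_short x2_fact x2_short.
  have [y1 ->] := short_cons x1 x1_fact x1_short; have [y2 ->] := short_cons x2 x2_fact x2_short.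
  by case=> _ ->.
move=> x x_fact x_short; have [y x_y] := short_cons x x_fact x_short; subst x.
move: x_fact x_short; rewrite mem_facts_gensD /= => /andP [size_y /eqP fact_adj] y_le.
by rewrite mem_facts_gensS size_y subnK //; split; apply/eqP; lia.
Qed.

Definition adj_predecessor i u v : Prop :=
  [/\ inAdj i v, v < u & forall w, inAdj i w -> v < w -> u <= w].

Lemma adj_predecessor_exists i u :
  ~ (forall w, inAdj i w -> u <= w) -> exists v, adj_predecessor i u v.
Proof.
move=> /existsPNP [w w_adj /negP]; rewrite -ltnNge => lt_wu.
pose P w := `[< inAdj i w >] && (w < u).
have exP : exists w, P w by exists w; rewrite /P lt_wu andbT; apply/asboolP.
have ubP w' : P w' -> w' <= u by case/andP=> _ /ltnW.
case: (ex_maxnP exP ubP) => v /andP [/asboolP v_adj lt_vu] v_max.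
exists v; split=> // w' w'_adj lt_vw'; rewrite leqNgt; apply/negP => lt_w'u.
have := v_max w'; rewrite /P lt_w'u andbT; move/(_ (introT (asboolP _) w'_adj)).
by rewrite leqNgt lt_vw'.
Qed.

Lemma inR_predE i u v k x : adj_predecessor i u v -> u = v + k * e ->
  inR e a i u x = (sumn x + k < minordB v).
Proof.
move=> [v_adj lt_vu v_pred] u_v; apply/asboolP/idP => [[u_min|[v' [v'_adj lt_v'u v'_pred]]]|].
- by have := u_min v v_adj; rewrite leqNgt lt_vu.
- have -> : v' = v.
    case: (ltngtP v' v) => [lt_v'v|lt_vv'|//].
      by have := v'_pred v v_adj lt_v'v; rewrite leqNgt lt_vu.
    by have := v_pred v' v'_adj lt_vv'; rewrite leqNgt lt_v'u.
  by rewrite u_v ltr_natBdiv.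
- by right; exists v; split=> //; rewrite u_v ltr_natBdiv.
Qed.

Lemma inR_of_ordS s x : inS gS s -> sumn x <= ordS s -> inR e a (s %% e) (adj s) x.
Proof.
move=> s_S x_short.
have [u_min|/adj_predecessor_exists [v v_pred]] :=
  pselect (forall w, inAdj (s %% e) w -> adj s <= w); first by apply/asboolP; left.
have [v_adj lt_vu _] := v_pred.
have [k k_gt0 u_v] := inAdj_gap (inAdj_adj s_S) v_adj lt_vu.
rewrite (inR_predE _ v_pred u_v).
have [sv [sv_S [_ adj_sv]]] := v_adj; have [y [_ y_fact _]] := adj_factorization sv_S.
rewrite adj_sv in y_fact.
have [x' x'_fact ->] := minordB_attained y_fact.
case: (leqP (sumn x') (ordS s + k)) => [x'_short|]; last by lia.
by have [_ k0] := short_factorization s_S x'_fact (esym u_v) x'_short; rewrite k0 in k_gt0.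
Qed.

Lemma dmaxn_le_Rcard s : inS gS s -> dmaxn e a s <= Rcard e a (s %% e) (adj s).
Proof. by move=> s_S; rewrite dmaxnE //; apply: sub_count => x; apply: inR_of_ordS. Qed.

Lemma adj_predecessor_step i u v : inAdj i u -> adj_predecessor i u v ->
  exists s, [/\ inS gS s, adj s = u & adj (s + e) = v].
Proof.
move=> [s [s_S [s_i adj_s]]] [[sv [sv_S [sv_i adj_sv]]] lt_vu v_pred].
have lt_s_sv : s < sv.
  rewrite ltnNge; apply/negP => le_sv_s.
  have [_] := adj_le_modn sv_S le_sv_s ltac:(by rewrite sv_i s_i).
  by rewrite adj_s adj_sv leqNgt lt_vu.
have e_dvd : e %| sv - s by rewrite -eqn_mod_dvd ?(ltnW lt_s_sv) // sv_i s_i.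
have sv_J : s + (sv - s) %/ e * e = sv by rewrite divnK // subnKC // ltnW.
pose f j := adj (s + j * e).
have sj_S j : inS gS (s + j * e) by have [] := adj_addMe j s_S.
have f_mono j j' : j <= j' -> f j' <= f j.
  move=> le_jj'; have [_ _] := adj_addMe (j' - j) (sj_S j).
  by rewrite -addnA -mulnDl subnKC.
have f_adj j : inAdj i (f j).
  by exists (s + j * e); split; [exact: sj_S | split; first rewrite addnC modnMDl].
have [j [lt_jJ fj fj1]] := @exists_last_eq f u ((sv - s) %/ e)
  ltac:(by rewrite /f mul0n addn0) ltac:(by rewrite /f sv_J adj_sv neq_ltn lt_vu).
exists (s + j * e); split=> //.
have -> : s + j * e + e = s + j.+1 * e by rewrite mulSnr addnA.
apply/eqP; rewrite eqn_leq; apply/andP; split.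
  rewrite leqNgt; apply/negP => lt_v_fj1.
  by have := v_pred _ (f_adj j.+1) lt_v_fj1; have := f_mono j j.+1 (leqnSn j); lia.
by rewrite -adj_sv -sv_J; apply: f_mono.
Qed.

Lemma inR_bounded i u : inAdj i u -> exists s,
  [/\ inS gS s, adj s = u & forall x, x \in facts gD u -> inR e a i u x -> sumn x <= ordS s].
Proof.
move=> u_adj.
have [u_min|/adj_predecessor_exists [v v_pred]] := pselect (forall w, inAdj i w -> u <= w).
  have [s [s_S [s_i adj_s]]] := u_adj; have [su_S ordS_su adj_su] := adj_addMe u s_S.
  exists (s + u * e); split=> // [|x].
    have su_adj : inAdj i (adj (s + u * e)).
      by exists (s + u * e); split=> //; split=> //; rewrite addnC modnMDl.
    by have := u_min _ su_adj; lia.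
  rewrite mem_facts ?gensD_pos // => /andP [/eqP size_x /eqP fact_u] _.
  by have := leq_sumn_wsum gensD_pos size_x; lia.
have [s [s_S adj_s adj_se]] := adj_predecessor_step u_adj v_pred.
have [v_adj lt_vu _] := v_pred; have [k _ u_v] := inAdj_gap u_adj v_adj lt_vu.
have [se_S _ _] := adj_addMe 1 s_S; rewrite mul1n in se_S.
have ordS_se : ordS (s + e) = ordS s + k + 1.
  apply/eqP; rewrite -(eqn_pmul2r e_gt0) !mulnDl.
  by have := adjD_ordS s_S; have := adjD_ordS se_S; rewrite adj_s adj_se u_v; lia.
have [y [_ y_fact y_short]] := adj_factorization se_S; rewrite adj_se in y_fact.
exists s; split=> // x _; rewrite (inR_predE _ v_pred u_v).
by have := minordB_le y_fact; rewrite /=; lia.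
Qed.

Lemma Rcard_le_dmaxn i u : inAdj i u -> exists2 s, inS gS s & Rcard e a i u <= dmaxn e a s.
Proof.
case/inR_bounded=> s [s_S adj_s R_short]; exists s => //.
rewrite dmaxnE // adj_s; apply: (count_leq_inj (f := id)); first exact: uniq_facts.
  by move=> x y _ _ _ _.
by move=> x x_fact /(R_short x x_fact).
Qed.

End NumericalSemigroup.

Theorem corollary3p11 (e : nat) (a : seq nat) :
  0 < e ->
  sorted ltn (e :: a) ->
  finite_complement (gensS e a) ->
  minimal_gens (gensS e a) ->
  exists m : nat,
    [/\ (exists n, inS (gensS e a) n /\ dmaxn e a n = m),
        (forall n, inS (gensS e a) n -> dmaxn e a n <= m),
        (exists i u, [/\ i < e, inAdj e a i u & Rcard e a i u = m]) &
        (forall i u, i < e -> inAdj e a i u -> Rcard e a i u <= m)].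
Proof.
move=> e_gt0 sorted_ea [N N_S] _.
have a_gt_e : all (fun x => e < x) a := order_path_min ltn_trans sorted_ea.
pose P d := `[< exists2 n, inS (gensS e a) n & dmaxn e a n = d >].
have exP : exists d, P d by exists (dmaxn e a N); apply/asboolP; exists N => //; apply: N_S.
have ubP d : P d -> d <= \max_(u < N + e) size (facts (gensD e a) u).
  case/asboolP=> n n_S <-; have adj_n := adj_lt e_gt0 a_gt_e N_S n_S.
  apply: leq_trans (dmaxn_le_Rcard e_gt0 a_gt_e n_S) (leq_trans (count_size _ _) _).
  exact: (leq_bigmax (Ordinal adj_n)).
have [m /asboolP [n0 n0_S dmaxn_n0] m_max] := ex_maxnP exP ubP.
have dmaxn_le n : inS (gensS e a) n -> dmaxn e a n <= m.
  by move=> n_S; apply: m_max; apply/asboolP; exists n.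
have Rcard_le i u : inAdj e a i u -> Rcard e a i u <= m.
  by case/(Rcard_le_dmaxn e_gt0 a_gt_e)=> n n_S /leq_trans; apply; apply: dmaxn_le.
exists m; split=> //; [by exists n0 | | by move=> i u _; apply: Rcard_le].
exists (n0 %% e), (adj e a n0); rewrite ltn_mod e_gt0; split=> //; first exact: inAdj_adj.
apply/anti_leq/andP; split; first exact/Rcard_le/inAdj_adj.
by rewrite -dmaxn_n0; apply: dmaxn_le_Rcard.
Qed.
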